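(* Let $(X,d)$ be a complete metric space, $\lambda>0$, and $\ell\in\mathrm{LSC}(X)$ bounded with $\inf_X\ell=0$. If $u,v\in\mathrm{LSC}(X)$ are, respectively, a bounded subsolution and a bounded supersolution of $(\mathcal{G}_\lambda)$, then $u\le v$ on $X$.
   Context: $\mathrm{LSC}(X)$ is the set of real-valued lower semicontinuous functions on $X$. Global slope: $G[u](x)=\sup_{y\neq x}\frac{(u(x)-u(y))_+}{d(x,y)}$ if $u(x)<+\infty$, $G[u](x)=+\infty$ otherwise. Equation $(\mathcal{G}_\lambda)$: $\lambda u+G[u]=\ell$ on $X$ with $\inf_Xu=0$. A subsolution is $u:X\to\mathbb{R}\cup\{+\infty\}$ with $\inf_Xu=0$ and $\lambda u+G[u]\le\ell$ on $X$; a supersolution is a lower semicontinuous $v:X\to\mathbb{R}\cup\{+\infty\}$ with $\inf_Xv=0$ and $\lambda v+G[v]\ge\ell$ on $X$. *)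

From Stdlib Require Import Reals.
From Coquelicot Require Import Coquelicot.
Open Scope R_scope.

Record is_metric {X : Type} (d : X -> X -> R) : Prop := {
  dist_eq0 : forall x y, d x y = 0 <-> x = y;
  dist_sym : forall x y, d x y = d y x;
  dist_tri : forall x y z, d x z <= d x y + d y z
}.

Definition cauchy_seq {X : Type} (d : X -> X -> R) (s : nat -> X) : Prop :=
  forall eps, 0 < eps -> exists N, forall m n, (N <= m)%nat -> (N <= n)%nat ->
    d (s m) (s n) < eps.

Definition converges_to {X : Type} (d : X -> X -> R) (s : nat -> X) (x : X) : Prop :=
  forall eps, 0 < eps -> exists N, forall n, (N <= n)%nat -> d (s n) x < eps.

Definition complete_metric {X : Type} (d : X -> X -> R) : Prop :=
  forall s, cauchy_seq d s -> exists x, converges_to d s x.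

Definition lsc {X : Type} (d : X -> X -> R) (u : X -> R) : Prop :=
  forall x t, t < u x -> exists delta, 0 < delta /\
    forall y, d x y < delta -> t < u y.

Definition bounded_fun {X : Type} (u : X -> R) : Prop :=
  exists M, forall x, Rabs (u x) <= M.

Definition inf_is_zero {X : Type} (u : X -> R) : Prop :=
  (forall x, 0 <= u x) /\ (forall eps, 0 < eps -> exists x, u x < eps).

Definition pos_part (r : R) : R := Rmax r 0.

(* Global slope G[u](x) = sup_{y <> x} (u x - u y)_+ / d x y, in Rbar
   (u is real-valued, so the "+oo if u(x) = +oo" branch never occurs).
   0 is included in the set: all quotients are >= 0, so this does not change
   the supremum, and it gives the value 0 when X = {x}. *)
Definition global_slope {X : Type} (d : X -> X -> R) (u : X -> R) (x : X) : Rbar :=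
  Lub_Rbar (fun r => r = 0 \/ exists y, y <> x /\ r = pos_part (u x - u y) / d x y).

Definition subsolution {X : Type} (d : X -> X -> R) (lam : R) (l u : X -> R) : Prop :=
  inf_is_zero u /\
  forall x, Rbar_le (Rbar_plus (Finite (lam * u x)) (global_slope d u x)) (Finite (l x)).

Definition supersolution {X : Type} (d : X -> X -> R) (lam : R) (l v : X -> R) : Prop :=
  lsc d v /\ inf_is_zero v /\
  forall x, Rbar_le (Finite (l x)) (Rbar_plus (Finite (lam * v x)) (global_slope d v x)).

(* Argue by contradiction at a point x0 where u > v. The subsolution inequality
   bounds the decrease of u at rate l - lam u, so u is Lipschitz from above and
   v - u is lower semicontinuous and bounded below. Ekeland's variational
   principle with eps = lam (u - v)(x0) / 2 gives a point xb with
   (u - v)(xb) >= (u - v)(x0) at which v - u is minimal up to the cone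
   eps d(xb, .). The supersolution inequality produces a y towards which v
   decreases at rate more than l - lam v - eps, while u decreases at rate at
   most l - lam u; against the Ekeland inequality this forces
   lam (u - v)(xb) < 2 eps = lam (u - v)(x0), a contradiction. *)

From Pilot Require Import Defs.
From Stdlib Require Import Reals Lra Classical IndefiniteDescription.
From Coquelicot Require Import Coquelicot.
Open Scope R_scope.

Lemma exists_inv_succ_lt (e : R) : 0 < e -> exists N, / INR (S N) < e.
Proof.
  intros He. destruct (archimed_cor1 e He) as [N [HN HN0]]. exists N.
  apply Rle_lt_trans with (/ INR N); [|exact HN].
  apply Rinv_le_contravar; [apply lt_0_INR; exact HN0|]. rewrite S_INR; lra.
Qed.

Lemma inv_succ_pos (n : nat) : 0 < / INR (S n).
Proof. apply Rinv_0_lt_compat, lt_0_INR, Nat.lt_0_succ. Qed.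

Lemma exists_near_inf {T : Type} (P : T -> Prop) (f : T -> R) (m delta : R) :
  (forall z, P z -> m <= f z) -> (exists z, P z) -> 0 < delta ->
  exists y, P y /\ forall z, P z -> f y <= f z + delta.
Proof.
  intros Hm [z0 Hz0] Hdelta.
  set (E := fun r => exists z, P z /\ r = - f z).
  assert (HE : bound E) by (exists (- m); intros r [z [Hz ->]]; specialize (Hm z Hz); lra).
  destruct (completeness E HE (ex_intro _ (- f z0) (ex_intro _ z0 (conj Hz0 eq_refl))))
    as [M [HMub HMleast]].
  destruct (classic (exists y, P y /\ M - delta < - f y)) as [[y [Hy Hfy]] | Hnone].
  - exists y. split; [exact Hy|]. intros z Hz.
    assert (- f z <= M) by (apply HMub; exists z; auto). lra.
  - assert (M <= M - delta); [|lra].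
    apply HMleast. intros r [z [Hz ->]].
    apply Rnot_lt_le. intros Hlt. apply Hnone. exists z. auto.
Qed.

Section Metric.

Variables (X : Type) (d : X -> X -> R).
Hypothesis Hd : is_metric d.

Lemma dist_self_eq0 (x : X) : d x x = 0.
Proof. apply (dist_eq0 d Hd). reflexivity. Qed.

Lemma dist_ge0 (x y : X) : 0 <= d x y.
Proof.
  pose proof (Defs.dist_tri d Hd x y x) as Htri.
  rewrite (Defs.dist_sym d Hd y x), dist_self_eq0 in Htri. lra.
Qed.

Lemma dist_gt0 (x y : X) : x <> y -> 0 < d x y.
Proof.
  intros Hxy. destruct (dist_ge0 x y) as [|Hxy0]; [assumption|].
  exfalso. apply Hxy, (dist_eq0 d Hd). auto.
Qed.

Lemma cauchy_seq_of_tail (s : nat -> X) :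
  (forall e, 0 < e -> exists N, forall m, (N <= m)%nat -> d (s N) (s m) < e) ->
  cauchy_seq d s.
Proof.
  intros Htail e He. destruct (Htail (e / 2)) as [N HN]; [lra|].
  exists N. intros m n Hm Hn.
  pose proof (HN m Hm). pose proof (HN n Hn).
  pose proof (Defs.dist_tri d Hd (s m) (s N) (s n)) as Htri.
  rewrite (Defs.dist_sym d Hd (s m) (s N)) in Htri. lra.
Qed.

End Metric.

Section Ekeland.

Variables (X : Type) (d : X -> X -> R) (f : X -> R) (eps : R).
Hypotheses (Hd : is_metric d) (Hf : lsc d f) (Heps : 0 < eps).

Definition ekeland_le (x y : X) : Prop := f y + eps * d x y <= f x.

Lemma ekeland_le_refl (x : X) : ekeland_le x x.
Proof. unfold ekeland_le. rewrite (dist_self_eq0 X d Hd). lra. Qed.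

Lemma ekeland_le_trans (x y z : X) : ekeland_le x y -> ekeland_le y z -> ekeland_le x z.
Proof.
  unfold ekeland_le. intros Hxy Hyz.
  pose proof (Defs.dist_tri d Hd x y z). nra.
Qed.

Lemma ekeland_le_fun (x y : X) : ekeland_le x y -> f y <= f x.
Proof. unfold ekeland_le. pose proof (dist_ge0 X d Hd x y). nra. Qed.

Lemma ekeland_le_closed (s : nat -> X) (x xb : X) (n : nat) :
  converges_to d s xb -> (forall m, (n <= m)%nat -> ekeland_le x (s m)) ->
  ekeland_le x xb.
Proof.
  intros Hxb Hs. unfold ekeland_le.
  apply Rnot_lt_le. intros Hgap.
  set (g := f xb + eps * d x xb - f x).
  destruct (Hf xb (f xb - g / 2)) as [delta [Hdelta Hnear]]; [unfold g; lra|].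
  destruct (Hxb (Rmin delta (g / (2 * eps)))) as [N HN].
  { apply Rmin_pos; [exact Hdelta|]. apply Rdiv_lt_0_compat; unfold g; lra. }
  specialize (HN (Nat.max n N) (Nat.le_max_r n N)).
  set (y := s (Nat.max n N)) in *.
  assert (Hfy : f xb - g / 2 < f y).
  { apply Hnear. rewrite (Defs.dist_sym d Hd).
    eapply Rlt_le_trans; [exact HN | apply Rmin_l]. }
  assert (Hdy : eps * d y xb < g / 2).
  { apply Rlt_le_trans with (eps * (g / (2 * eps))).
    - apply Rmult_lt_compat_l; [exact Heps|].
      eapply Rlt_le_trans; [exact HN | apply Rmin_r].
    - right. field. lra. }
  specialize (Hs _ (Nat.le_max_l n N)). fold y in Hs. unfold ekeland_le in Hs.
  pose proof (Defs.dist_tri d Hd x y xb). unfold g in *. nra.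
Qed.

Hypothesis Hbelow : exists m, forall x, m <= f x.

Lemma ekeland_step (n : nat) (x : X) :
  exists y, ekeland_le x y /\ forall z, ekeland_le x z -> f y <= f z + / INR (S n).
Proof.
  destruct Hbelow as [m Hm].
  apply (exists_near_inf _ _ m); [auto | exists x; apply ekeland_le_refl | apply inv_succ_pos].
Qed.

Definition ekeland_seq (s : nat -> X) : Prop :=
  forall n, ekeland_le (s n) (s (S n)) /\
    forall z, ekeland_le (s n) z -> f (s (S n)) <= f z + / INR (S n).

Lemma ekeland_seq_exists (x0 : X) : exists s, s O = x0 /\ ekeland_seq s.
Proof.
  destruct (functional_choice (fun (p : nat * X) y => ekeland_le (snd p) y /\
      forall z, ekeland_le (snd p) z -> f y <= f z + / INR (S (fst p))))
    as [step Hstep].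
  { intros [n x]. apply ekeland_step. }
  exists (fix s n := match n with O => x0 | S k => step (k, s k) end).
  split; [reflexivity|]. intros n. apply (Hstep (n, _)).
Qed.

Section Sequence.

Variable s : nat -> X.
Hypothesis Hs : ekeland_seq s.

Lemma ekeland_seq_mono (n m : nat) : (n <= m)%nat -> ekeland_le (s n) (s m).
Proof.
  induction 1 as [|m _ IH]; [apply ekeland_le_refl|].
  eapply ekeland_le_trans; [exact IH | apply Hs].
Qed.

(* [s (S n)] is 1/(n+1)-minimal among the successors of [s n], which include [s m]. *)
Lemma ekeland_seq_tail_dist (n m : nat) :
  (S n <= m)%nat -> eps * d (s (S n)) (s m) <= / INR (S n).
Proof.
  intros Hm.
  pose proof (ekeland_seq_mono _ _ Hm) as Hsucc.
  destruct (Hs n) as [Hstep Hmin].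
  specialize (Hmin _ (ekeland_le_trans _ _ _ Hstep Hsucc)).
  unfold ekeland_le in Hsucc. lra.
Qed.

Lemma ekeland_seq_cauchy : cauchy_seq d s.
Proof.
  apply (cauchy_seq_of_tail X d Hd). intros e He.
  destruct (exists_inv_succ_lt (eps * e)) as [N HN]; [nra|].
  exists (S N). intros m Hm.
  pose proof (ekeland_seq_tail_dist N m Hm).
  apply Rmult_lt_reg_l with eps; [exact Heps | lra].
Qed.

End Sequence.

Hypothesis Hcomplete : complete_metric d.

Theorem ekeland_variational (x0 : X) :
  exists xb, f xb <= f x0 /\ forall y, f xb <= f y + eps * d xb y.
Proof.
  destruct (ekeland_seq_exists x0) as [s [Hs0 Hs]].
  destruct (Hcomplete s (ekeland_seq_cauchy s Hs)) as [xb Hxb].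
  assert (Hlim : forall n, ekeland_le (s n) xb).
  { intros n. apply (ekeland_le_closed s _ _ n Hxb).
    intros m Hm. apply ekeland_seq_mono; assumption. }
  exists xb. split.
  - rewrite <- Hs0. apply ekeland_le_fun, Hlim.
  - intros y. apply Rnot_lt_le. intros Hlt.
    assert (Hy : ekeland_le xb y) by (unfold ekeland_le; lra).
    assert (Happrox : forall n, f xb <= f y + / INR (S n)).
    { intros n. destruct (Hs n) as [_ Hmin].
      specialize (Hmin y (ekeland_le_trans _ _ _ (Hlim n) Hy)).
      pose proof (ekeland_le_fun _ _ (Hlim (S n))). lra. }
    pose proof (dist_ge0 X d Hd xb y).
    destruct (exists_inv_succ_lt (f xb - f y)) as [N HN]; [nra|].
    specialize (Happrox N). lra.
Qed.

End Ekeland.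

Section GlobalSlope.

Variables (X : Type) (d : X -> X -> R).
Hypothesis Hd : is_metric d.

Lemma global_slope_ge0 (u : X -> R) (x : X) : Rbar_le 0 (global_slope d u x).
Proof. apply (proj1 (Lub_Rbar_correct _)). left. reflexivity. Qed.

Lemma global_slope_le_diff (u : X -> R) (x y : X) (c : R) :
  Rbar_le (global_slope d u x) c -> u x - u y <= c * d x y.
Proof.
  intros Hc. destruct (classic (y = x)) as [-> | Hyx].
  { rewrite (dist_self_eq0 X d Hd). lra. }
  pose proof (dist_gt0 X d Hd x y (not_eq_sym Hyx)) as Hxy.
  assert (Hq : pos_part (u x - u y) / d x y <= c).
  { change (Rbar_le (pos_part (u x - u y) / d x y) c).
    eapply Rbar_le_trans; [|exact Hc].
    apply (proj1 (Lub_Rbar_correct _)). right. exists y. auto. }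
  apply Rle_div_l in Hq; [|exact Hxy].
  pose proof (Rmax_l (u x - u y) 0). unfold pos_part in Hq. lra.
Qed.

Lemma global_slope_gt_diff (u : X -> R) (x : X) (c r : R) :
  0 <= c -> c < r -> Rbar_le r (global_slope d u x) ->
  exists y, c * d x y < u x - u y.
Proof.
  intros Hc Hcr Hr. apply NNPP. intros Hnone.
  assert (Hle : Rbar_le (global_slope d u x) c).
  { apply (proj2 (Lub_Rbar_correct _)). intros q [-> | [y [Hyx ->]]]; simpl; [exact Hc|].
    pose proof (dist_gt0 X d Hd x y (not_eq_sym Hyx)) as Hxy.
    apply Rle_div_l; [exact Hxy|]. unfold pos_part. apply Rmax_lub.
    - apply Rnot_lt_le. intros Hlt. apply Hnone. exists y. exact Hlt.
    - apply Rmult_le_pos; lra. }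
  pose proof (Rbar_le_trans _ _ _ Hr Hle). simpl in *. lra.
Qed.

Variables (lam : R) (l : X -> R).

Lemma subsolution_slope_le (u : X -> R) (x : X) :
  subsolution d lam l u -> Rbar_le (global_slope d u x) (l x - lam * u x).
Proof.
  intros [_ Hsub]. specialize (Hsub x).
  destruct (global_slope d u x); simpl in *; auto; lra.
Qed.

Lemma subsolution_residual_ge0 (u : X -> R) (x : X) :
  subsolution d lam l u -> 0 <= l x - lam * u x.
Proof.
  intros Hsub.
  exact (Rbar_le_trans 0 _ (l x - lam * u x)
    (global_slope_ge0 u x) (subsolution_slope_le u x Hsub)).
Qed.

Lemma subsolution_diff_le (u : X -> R) (x y : X) :
  subsolution d lam l u -> u x - u y <= (l x - lam * u x) * d x y.
Proof. intros Hsub. apply global_slope_le_diff, subsolution_slope_le, Hsub. Qed.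

Lemma supersolution_slope_ge (v : X -> R) (x : X) :
  supersolution d lam l v -> Rbar_le (l x - lam * v x) (global_slope d v x).
Proof.
  intros [_ [_ Hsup]]. specialize (Hsup x).
  destruct (global_slope d v x); simpl in *; auto; lra.
Qed.

Lemma supersolution_descent (v : X -> R) (x : X) (c : R) :
  supersolution d lam l v -> 0 <= c -> c < l x - lam * v x ->
  exists y, c * d x y < v x - v y.
Proof.
  intros Hsup Hc Hcr.
  exact (global_slope_gt_diff v x c _ Hc Hcr (supersolution_slope_ge v x Hsup)).
Qed.

End GlobalSlope.

Section Comparison.

Variables (X : Type) (d : X -> X -> R).
Hypothesis Hd : is_metric d.

Lemma subsolution_upper_lipschitz (lam : R) (l u : X -> R) :
  0 <= lam -> bounded_fun l -> bounded_fun u -> subsolution d lam l u ->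
  exists L, 0 <= L /\ forall x y, u y - u x <= L * d x y.
Proof.
  intros Hlam [Ml HMl] [Mu HMu] Hsub.
  exists (Rabs Ml + lam * Rabs Mu). split.
  { pose proof (Rabs_pos Ml). pose proof (Rabs_pos Mu). nra. }
  intros x y.
  assert (Hres : l y - lam * u y <= Rabs Ml + lam * Rabs Mu).
  { pose proof (Rle_trans _ _ _ (Rle_abs (l y)) (HMl y)).
    pose proof (Rle_trans _ _ _ (Rle_abs (- u y)) (ltac:(rewrite Rabs_Ropp; apply HMu))).
    pose proof (Rle_abs Ml). pose proof (Rle_abs Mu). nra. }
  pose proof (subsolution_diff_le X d Hd lam l u y x Hsub).
  rewrite (Defs.dist_sym d Hd y x) in *.
  pose proof (dist_ge0 X d Hd x y). nra.
Qed.

Lemma lsc_sub_upper_lipschitz (u v : X -> R) (L : R) :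
  lsc d v -> 0 <= L -> (forall x y, u y - u x <= L * d x y) ->
  lsc d (fun x => v x - u x).
Proof.
  intros Hv HL Hu x t Ht.
  set (eta := (v x - u x - t) / 2).
  destruct (Hv x (v x - eta)) as [delta [Hdelta Hnear]]; [unfold eta; lra|].
  exists (Rmin delta (eta / (L + 1))). split.
  { apply Rmin_pos; [exact Hdelta|]. apply Rdiv_lt_0_compat; unfold eta; lra. }
  intros y Hy.
  specialize (Hnear y (Rlt_le_trans _ _ _ Hy (Rmin_l _ _))).
  assert (Hdy : (L + 1) * d x y < eta).
  { apply Rlt_le_trans with ((L + 1) * (eta / (L + 1))).
    - apply Rmult_lt_compat_l; [lra|]. eapply Rlt_le_trans; [exact Hy | apply Rmin_r].
    - right. field. lra. }
  pose proof (Hu x y). pose proof (dist_ge0 X d Hd x y). unfold eta in *. nra.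
Qed.

Lemma bounded_fun_sub_lower (u v : X -> R) :
  bounded_fun u -> bounded_fun v -> exists m, forall x, m <= v x - u x.
Proof.
  intros [Mu HMu] [Mv HMv]. exists (- Mv - Mu). intros x.
  pose proof (proj1 (Rabs_le_between _ _) (HMu x)).
  pose proof (proj1 (Rabs_le_between _ _) (HMv x)). lra.
Qed.

Lemma ekeland_point_gap_lt (lam eps : R) (l u v : X -> R) (xb : X) :
  subsolution d lam l u -> supersolution d lam l v -> 0 < eps ->
  (forall y, v xb - u xb <= v y - u y + eps * d xb y) ->
  lam * (u xb - v xb) < 2 * eps.
Proof.
  intros Hsub Hsup Heps Hmin. apply Rnot_le_lt. intros Hgap.
  pose proof (subsolution_residual_ge0 X d lam l u xb Hsub).
  destruct (supersolution_descent X d Hd lam l v xb (l xb - lam * v xb - eps) Hsup)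
    as [y Hy]; [nra | lra |].
  pose proof (subsolution_diff_le X d Hd lam l u xb y Hsub).
  pose proof (Hmin y). pose proof (dist_ge0 X d Hd xb y). nra.
Qed.

End Comparison.

Theorem theorem3p14 (X : Type) (d : X -> X -> R) (lam : R) (l u v : X -> R) :
  is_metric d -> complete_metric d -> 0 < lam ->
  lsc d l -> bounded_fun l -> inf_is_zero l ->
  lsc d u -> bounded_fun u -> subsolution d lam l u ->
  lsc d v -> bounded_fun v -> supersolution d lam l v ->
  forall x, u x <= v x.
Proof.
  intros Hd Hcomplete Hlam _ Hl _ _ Hu Hsub Hv Hvb Hsup x0.
  apply Rnot_lt_le. intros Hgt.
  destruct (subsolution_upper_lipschitz X d Hd lam l u) as [L [HL Hlip]]; [lra | assumption..|].
  set (eps := lam * (u x0 - v x0) / 2).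
  assert (Heps : 0 < eps) by (unfold eps; nra).
  destruct (ekeland_variational X d (fun x => v x - u x) eps Hd
              (lsc_sub_upper_lipschitz X d Hd u v L Hv HL Hlip) Heps
              (bounded_fun_sub_lower X u v Hu Hvb) Hcomplete x0)
    as [xb [Hdecrease Hmin]].
  pose proof (ekeland_point_gap_lt X d Hd lam eps l u v xb Hsub Hsup Heps Hmin).
  unfold eps in *. nra.
Qed.
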